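(* Let $X, Y, Z$ be uncertain variables on a common set $\Omega$ with finite ranges. Then: (a) $\mathcal{L}_\star(X\rightarrow Y)\geq 0$; (b) $\mathcal{L}_\star(X\rightarrow Y)=0$ if and only if $X$ and $Y$ are unrelated; (c) $\mathcal{L}_\star(X\rightarrow Y)\leq H_0(X)$, with equality if $Y=X$; (d) if $X-Y-Z$ is a Markov chain, then $\mathcal{L}_\star(X\rightarrow Z)\leq \mathcal{L}_\star(X\rightarrow Y)$.
   Context: Let $\Omega$ be a set. An uncertain variable (uv) is a map $X:\Omega\to\mathbb{X}$ into some set; all uvs considered have finite ranges. The range of $X$ is $[\![X]\!]:=\{X(\omega):\omega\in\Omega\}$; the joint range of $X,Y$ is $[\![X,Y]\!]:=\{(X(\omega),Y(\omega)):\omega\in\Omega\}$; the conditional range is $[\![X\mid Y(\omega)=y]\!]:=\{X(\omega):\omega\in\Omega,\ Y(\omega)=y\}$, and similarly $[\![X\mid Z(\omega)=z,Y(\omega)=y]\!]:=\{X(\omega):\omega\in\Omega,\ Z(\omega)=z,\ Y(\omega)=y\}$. Uvs $X$ and $Y$ are unrelated if $[\![X\mid Y(\omega)=y]\!]=[\![X]\!]$ for all $y\in[\![Y]\!]$ and $[\![Y\mid X(\omega)=x]\!]=[\![Y]\!]$ for all $x\in[\![X]\!]$. Uvs $X,Y,Z$ form a Markov chain $X-Y-Z$ if $[\![X\mid Z(\omega)=z,Y(\omega)=y]\!]=[\![X\mid Y(\omega)=y]\!]$ for all $(z,y)\in[\![Z,Y]\!]$. The non-stochastic entropy is $H_0(X):=\log_2|[\![X]\!]|$.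 The non-stochastic brute-force guessing leakage from a uv $U$ to a uv $Y$ is $$\mathcal{L}(U\rightarrow Y):=\log_2\left(\frac{|[\![U]\!]|}{\min_{y\in[\![Y]\!]}|[\![U\mid Y(\omega)=y]\!]|}\right).$$ The maximal non-stochastic brute-force leakage from $X$ to $Y$ is $$\mathcal{L}_\star(X\rightarrow Y):=\sup_{g}\ \mathcal{L}(g\circ X\rightarrow Y),$$ where the supremum ranges over all finite sets $\mathcal{U}$ and all functions $g:[\![X]\!]\to\mathcal{U}$. *)

From HB Require Import structures.
From mathcomp Require Import all_boot all_order all_algebra.
From mathcomp Require Import boolp classical_sets reals exp.
Set Implicit Arguments. Unset Strict Implicit. Unset Printing Implicit Defensive.
Import Order.TTheory GRing.Theory Num.Theory.

Section UV.
Variable Omega : Type.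

Definition urange (T : finType) (X : Omega -> T) : {set T} :=
  [set x | `[< exists w, X w = x >]].

Definition ujrange (T1 T2 : finType) (X : Omega -> T1) (Y : Omega -> T2)
  : {set T1 * T2} :=
  [set p | `[< exists w, X w = p.1 /\ Y w = p.2 >]].

Definition ucrange (T1 T2 : finType) (X : Omega -> T1) (Y : Omega -> T2) (y : T2)
  : {set T1} :=
  [set x | `[< exists w, Y w = y /\ X w = x >]].

Definition ucrange2 (T1 T2 T3 : finType) (X : Omega -> T1) (Z : Omega -> T3)
  (Y : Omega -> T2) (z : T3) (y : T2) : {set T1} :=
  [set x | `[< exists w, Z w = z /\ Y w = y /\ X w = x >]].

Definition unrelated (T1 T2 : finType) (X : Omega -> T1) (Y : Omega -> T2) : Prop :=
  (forall y, y \in urange Y -> ucrange X Y y = urange X) /\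
  (forall x, x \in urange X -> ucrange Y X x = urange Y).

Definition markov (T1 T2 T3 : finType) (X : Omega -> T1) (Y : Omega -> T2)
  (Z : Omega -> T3) : Prop :=
  forall z y, (z, y) \in ujrange Z Y -> ucrange2 X Z Y z y = ucrange X Y y.

Variable R : realType.

Definition log2 (x : R) : R := ln x / ln 2.

Definition H0 (T : finType) (X : Omega -> T) : R := log2 (#|urange X|%:R).

(* min_{y in [[Y]]} |[[U | Y = y]]|; the neutral element #|TU| is an upper
   bound of every such cardinality, so this is the true minimum whenever
   [[Y]] is nonempty. *)
Definition min_crange (TU TY : finType) (U : Omega -> TU) (Y : Omega -> TY) : nat :=
  \big[minn/#|TU|]_(y in urange Y) #|ucrange U Y y|.

Definition bf_leak (TU TY : finType) (U : Omega -> TU) (Y : Omega -> TY) : R :=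
  log2 (#|urange U|%:R / (min_crange U Y)%:R).

Definition max_leak (TX TY : finType) (X : Omega -> TX) (Y : Omega -> TY) : R :=
  sup [set r : R | exists (TU : finType) (g : TX -> TU), r = bf_leak (g \o X) Y].

End UV.

From HB Require Import structures.
From mathcomp Require Import all_boot all_order all_algebra.
From mathcomp Require Import boolp classical_sets reals exp.
Set Implicit Arguments. Unset Strict Implicit. Unset Printing Implicit Defensive.
Import Order.TTheory GRing.Theory Num.Theory.
Local Open Scope ring_scope.

(* Everything reduces to the combinatorial quantity
   m(U, Y) = min_{y in [[Y]]} |[[U | Y = y]]|, which (for inhabited Omega)
   satisfies 1 <= m(U, Y) <= |[[U]]|, so that L(U -> Y) = log2(|[[U]]|/m(U, Y))
   lies in [0, log2 |[[U]]|].
   Finally L_* is a supremum bounded by H0(X) and attained-from-below by every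
   L(g o X -> Y), which turns these facts into parts (a)-(d). *)

Section Ranges.
Variable Omega : Type.

Lemma in_urange (T : finType) (X : Omega -> T) x :
  (x \in urange X) <-> exists w, X w = x.
Proof. by rewrite inE; split => [/asboolP|?]; [|apply/asboolP]. Qed.

Lemma in_ujrange (T1 T2 : finType) (X : Omega -> T1) (Y : Omega -> T2) p :
  (p \in ujrange X Y) <-> exists w, X w = p.1 /\ Y w = p.2.
Proof. by rewrite inE; split => [/asboolP|?]; [|apply/asboolP]. Qed.

Lemma in_ucrange (T1 T2 : finType) (X : Omega -> T1) (Y : Omega -> T2) y x :
  (x \in ucrange X Y y) <-> exists w, Y w = y /\ X w = x.
Proof. by rewrite inE; split => [/asboolP|?]; [|apply/asboolP]. Qed.

Lemma in_ucrange2 (T1 T2 T3 : finType) (X : Omega -> T1) (Z : Omega -> T3)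
  (Y : Omega -> T2) z y x :
  (x \in ucrange2 X Z Y z y) <-> exists w, Z w = z /\ Y w = y /\ X w = x.
Proof. by rewrite inE; split => [/asboolP|?]; [|apply/asboolP]. Qed.

Lemma urange_comp (T U : finType) (X : Omega -> T) (g : T -> U) :
  urange (g \o X) = g @: urange X.
Proof.
apply/setP => u; apply/idP/imsetP => [/in_urange [w <-]|[x /in_urange [w <-] ->]].
  by exists (X w) => //; apply/in_urange; exists w.
by apply/in_urange; exists w.
Qed.

Lemma ucrange_comp (T U T2 : finType) (X : Omega -> T) (Y : Omega -> T2)
  (g : T -> U) y :
  ucrange (g \o X) Y y = g @: ucrange X Y y.
Proof.
apply/setP => u; apply/idP/imsetP.
  by move=> /in_ucrange [w [? <-]]; exists (X w) => //; apply/in_ucrange; exists w.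
by move=> [x /in_ucrange [w [? <-]] ->]; apply/in_ucrange; exists w.
Qed.

Lemma ucrange_sub (T1 T2 : finType) (X : Omega -> T1) (Y : Omega -> T2) y :
  ucrange X Y y \subset urange X.
Proof.
by apply/fintype.subsetP => x /in_ucrange [w [_ <-]]; apply/in_urange; exists w.
Qed.

(* If every conditional range of X given Y is full, so is every conditional
   range of Y given X: this is why one half of "unrelated" suffices. *)
Lemma full_ucrange_sym (T1 T2 : finType) (X : Omega -> T1) (Y : Omega -> T2) :
  (forall y, y \in urange Y -> ucrange X Y y = urange X) -> unrelated X Y.
Proof.
move=> fullX; split => // x Hx; apply/eqP; rewrite finset.eqEsubset ucrange_sub /=.
apply/fintype.subsetP => y Hy; move: Hx; rewrite -(fullX y Hy) => /in_ucrange [w [<- <-]].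
by apply/in_ucrange; exists w.
Qed.

Lemma markov_ucrange_sub (T1 T2 T3 : finType) (X : Omega -> T1)
  (Y : Omega -> T2) (Z : Omega -> T3) w :
  markov X Y Z -> ucrange X Y (Y w) \subset ucrange X Z (Z w).
Proof.
move=> HM; have Hj : (Z w, Y w) \in ujrange Z Y by apply/in_ujrange; exists w.
apply/fintype.subsetP => x; rewrite -(HM _ _ Hj) => /in_ucrange2 [w' [Hz [_ Hx]]].
by apply/in_ucrange; exists w'.
Qed.

End Ranges.

Section MinCondRange.
Variables (Omega : Type) (TU TY : finType) (U : Omega -> TU) (Y : Omega -> TY).

Lemma min_crange_le {y} :
  y \in urange Y -> (min_crange U Y <= #|ucrange U Y y|)%N.
Proof.
move=> Hy; rewrite /min_crange.
have : y \in index_enum TY by rewrite mem_index_enum.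
elim: (index_enum TY) => [//|a r IH]; rewrite in_cons big_cons.
case/orP => [/eqP <-|/IH le_r]; first by rewrite Hy geq_minl.
by case: ifP => // _; rewrite geq_min le_r orbT.
Qed.

Lemma min_crange_ge n :
  (forall y, y \in urange Y -> n <= #|ucrange U Y y|)%N -> (n <= #|TU|)%N ->
  (n <= min_crange U Y)%N.
Proof.
move=> H Hn; apply: (big_ind (fun m => n <= m)%N) => // a b Ha Hb.
by rewrite leq_min Ha Hb.
Qed.

Hypothesis inhabited_Omega : inhabited Omega.

Lemma min_crange_gt0 : (0 < min_crange U Y)%N.
Proof.
have [w0] := inhabited_Omega; apply: min_crange_ge; last first.
  by apply/card_gt0P; exists (U w0).
move=> y /in_urange [w <-]; apply/card_gt0P; exists (U w).
by apply/in_ucrange; exists w.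
Qed.

Lemma min_crange_le_range : (min_crange U Y <= #|urange U|)%N.
Proof.
have [w0] := inhabited_Omega.
have Hy0 : Y w0 \in urange Y by apply/in_urange; exists w0.
exact: leq_trans (min_crange_le Hy0) (subset_leq_card (ucrange_sub U Y _)).
Qed.

Lemma min_crange_eq_range :
  min_crange U Y = #|urange U| <->
  forall y, y \in urange Y -> ucrange U Y y = urange U.
Proof.
split=> [Emin y Hy | full].
  by apply/eqP; rewrite eqEcard ucrange_sub -Emin min_crange_le.
apply/eqP; rewrite eqn_leq min_crange_le_range min_crange_ge ?max_card //.
by move=> y Hy; rewrite full.
Qed.

End MinCondRange.

Section Log2.
Variable R : realType.

Lemma ln2_gt0 : 0 < ln (2 : R).
Proof. by apply: ln_gt0; rewrite ltr1n. Qed.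

Lemma log2_le (x y : R) : 0 < x -> x <= y -> log2 x <= log2 y.
Proof.
move=> x0 xy; rewrite /log2; apply: ler_wpM2r; first by rewrite invr_ge0 ltW ?ln2_gt0.
by rewrite ler_ln // posrE (lt_le_trans x0 xy).
Qed.

Lemma log2_ge0 (x : R) : 1 <= x -> 0 <= log2 x.
Proof. by move=> x1; rewrite /log2 mulr_ge0 ?ln_ge0 // invr_ge0 ltW // ln2_gt0. Qed.

Lemma log2_eq0 (x : R) : 0 < x -> log2 x = 0 <-> x = 1.
Proof.
move=> x0; rewrite /log2; split => [/eqP|->]; last by rewrite ln1 mul0r.
rewrite mulf_eq0 invr_eq0 (gt_eqF ln2_gt0) orbF ln_eq0 //.
by move/eqP.
Qed.

End Log2.

Section BruteForceLeakage.
Variables (R : realType) (Omega : Type).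
Hypothesis inhabited_Omega : inhabited Omega.

Lemma bf_leak_ge0 (TU TY : finType) (U : Omega -> TU) (Y : Omega -> TY) :
  0 <= bf_leak R U Y.
Proof.
have m0 := min_crange_gt0 U Y inhabited_Omega.
apply: log2_ge0; rewrite ler_pdivlMr ?ltr0n // mul1r ler_nat.
exact: min_crange_le_range.
Qed.

Lemma bf_leak_le_range (TU TY : finType) (U : Omega -> TU) (Y : Omega -> TY) :
  bf_leak R U Y <= log2 (#|urange U|%:R).
Proof.
have m0 := min_crange_gt0 U Y inhabited_Omega.
have a0 := leq_trans m0 (min_crange_le_range U Y inhabited_Omega).
apply: log2_le; first by rewrite divr_gt0 ?ltr0n.
by rewrite ler_pdivrMr ?ltr0n // ler_peMr ?ler0n // ler1n.
Qed.

Lemma bf_leak_eq0 (TU TY : finType) (U : Omega -> TU) (Y : Omega -> TY) :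
  bf_leak R U Y = 0 <->
  forall y, y \in urange Y -> ucrange U Y y = urange U.
Proof.
have m0 := min_crange_gt0 U Y inhabited_Omega.
have a0 := leq_trans m0 (min_crange_le_range U Y inhabited_Omega).
have m0' : (min_crange U Y)%:R != 0 :> R by rewrite pnatr_eq0 -lt0n.
rewrite -min_crange_eq_range // /bf_leak log2_eq0 ?divr_gt0 ?ltr0n //.
split=> [ratio1|<-]; last exact: divff.
apply/eqP; rewrite -(eqr_nat R) eq_sym.
by rewrite -[X in X == _](divfK m0') ratio1 mul1r.
Qed.

Lemma bf_leak_antitone (TU TY TZ : finType) (U : Omega -> TU)
  (Y : Omega -> TY) (Z : Omega -> TZ) :
  (forall z, z \in urange Z ->
     exists2 y, y \in urange Y & ucrange U Y y \subset ucrange U Z z) ->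
  bf_leak R U Z <= bf_leak R U Y.
Proof.
move=> finer.
have mY := min_crange_gt0 U Y inhabited_Omega.
have mZ := min_crange_gt0 U Z inhabited_Omega.
have a0 := leq_trans mY (min_crange_le_range U Y inhabited_Omega).
have mYZ : (min_crange U Y <= min_crange U Z)%N.
  apply: min_crange_ge => [z /finer [y Hy sub]|].
    exact: leq_trans (min_crange_le U Hy) (subset_leq_card sub).
  exact: leq_trans (min_crange_le_range U Y inhabited_Omega) (max_card _).
apply: log2_le; first by rewrite divr_gt0 ?ltr0n.
by rewrite ler_wpM2l ?ler0n // lef_pV2 ?posrE ?ltr0n // ler_nat.
Qed.

Lemma bf_leak_self (T : finType) (X : Omega -> T) : bf_leak R X X = H0 R X.
Proof.
have [w0] := inhabited_Omega.
suff min1 : min_crange X X = 1%N by rewrite /bf_leak min1 divr1.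
apply/eqP; rewrite eqn_leq min_crange_gt0 // andbT.
have Hx0 : X w0 \in urange X by apply/in_urange; exists w0.
apply: leq_trans (min_crange_le X Hx0) _; rewrite -(cards1 (X w0)).
by apply/subset_leq_card/fintype.subsetP => x /in_ucrange [w [-> <-]]; rewrite inE.
Qed.

End BruteForceLeakage.

Section MaximalLeakage.
Variables (R : realType) (Omega : Type) (TX TY : finType).
Variables (X : Omega -> TX) (Y : Omega -> TY).
Hypothesis inhabited_Omega : inhabited Omega.

Let leaks := [set r : R | exists (TU : finType) (g : TX -> TU),
  r = bf_leak R (g \o X) Y]%classic.

(* Processing X cannot increase its range, so H0(X) bounds every leakage. *)
Lemma bf_leak_comp_le_H0 (TU : finType) (g : TX -> TU) :
  bf_leak R (g \o X) Y <= H0 R X.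
Proof.
have [w0] := inhabited_Omega.
apply: le_trans (bf_leak_le_range _ inhabited_Omega _ _) _.
apply: log2_le; last by rewrite ler_nat urange_comp leq_imset_card.
by rewrite ltr0n; apply/card_gt0P; exists (g (X w0)); apply/in_urange; exists w0.
Qed.

Lemma leaks_ubound : ubound leaks (H0 R X).
Proof. by move=> r [TU [g ->]]; apply: bf_leak_comp_le_H0. Qed.

Lemma leaks_neq0 : (leaks !=set0)%classic.
Proof. by exists (bf_leak R X Y); exists TX, id. Qed.

Lemma bf_leak_le_max_leak (TU : finType) (g : TX -> TU) :
  bf_leak R (g \o X) Y <= max_leak R X Y.
Proof. by apply: (ub_le_sup (ex_intro _ _ leaks_ubound)); exists TU, g. Qed.

Lemma max_leak_le (c : R) :
  (forall (TU : finType) (g : TX -> TU), bf_leak R (g \o X) Y <= c) ->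
  max_leak R X Y <= c.
Proof. by move=> H; apply: (ge_sup leaks_neq0) => r [TU [g ->]]. Qed.

Lemma max_leak_ge0 : 0 <= max_leak R X Y.
Proof. exact: le_trans (bf_leak_ge0 _ inhabited_Omega _ _) (bf_leak_le_max_leak id). Qed.

Lemma max_leak_le_H0 : max_leak R X Y <= H0 R X.
Proof. exact: max_leak_le bf_leak_comp_le_H0. Qed.

End MaximalLeakage.

Theorem proposition3 (R : realType) (Omega : Type) (TX TY TZ : finType)
  (X : Omega -> TX) (Y : Omega -> TY) (Z : Omega -> TZ) :
  inhabited Omega ->
  [/\ 0 <= max_leak R X Y,
      max_leak R X Y = 0 <-> unrelated X Y,
      max_leak R X Y <= H0 R X /\ max_leak R X X = H0 R X
    & markov X Y Z -> max_leak R X Z <= max_leak R X Y].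
Proof.
move=> inh; split; [exact: max_leak_ge0 | split | split | ].
- move=> ml0; apply/full_ucrange_sym/(bf_leak_eq0 R inh); apply/le_anti.
  by rewrite bf_leak_ge0 // andbT -ml0 (bf_leak_le_max_leak R X Y inh id).
- move=> [fullX _]; apply/le_anti; rewrite max_leak_ge0 // andbT.
  apply: max_leak_le => // TU g; suff -> : bf_leak R (g \o X) Y = 0 by [].
  by apply/(bf_leak_eq0 R inh) => y Hy; rewrite ucrange_comp urange_comp fullX.
- exact: max_leak_le_H0.
- apply/le_anti; rewrite max_leak_le_H0 //= -(bf_leak_self R inh X).
  exact: (bf_leak_le_max_leak R X X inh id).
- move=> HM; apply: max_leak_le => // TU g.
  apply: le_trans (bf_leak_le_max_leak R X Y inh g).
  apply: bf_leak_antitone => // z /in_urange [w <-].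
  exists (Y w); first by apply/in_urange; exists w.
  by rewrite !ucrange_comp imsetS // markov_ucrange_sub.
Qed.
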